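(* Let $\mathcal H_{PT}$ and $\mathcal H_{CK}$ be the Hopf algebras described below and define $\mathrm{sk}$ on reduced plane trees by $\mathrm{sk}(|)=\emptyset$ for the single-leaf tree $|$ and, if the root of $t$ has children subtrees $t_1,\dots,t_n$ ($n\ge2$), $\mathrm{sk}(t)=B^+_{n-1}\big(\mathrm{sk}(t_1)\cdots\mathrm{sk}(t_n)\big)$. Then the algebra morphism $\mathrm{sk}:\mathcal H_{PT}\to\mathcal H_{CK}$ extending this map is a morphism of Hopf algebras.
   Context: A reduced plane tree is a rooted plane tree in which every internal vertex has at least two children. For a tree $t_0$ with $n$ leaves, $t_0\circ(t_1,\dots,t_n)$ is obtained by replacing the leaves of $t_0$, from left to right, by the trees $t_1,\dots,t_n$. $\mathcal H_{PT}$ is the free unital associative algebra over $\mathbb C$ generated by the reduced plane trees with at least two leaves, the single-leaf tree $|$ being identified with the unit (so a basis is given by plane forests, i.e. words of such trees), with coproduct defined on trees by $$\Delta(t)=\sum_{t=t_0\circ(t_1,\dots,t_n)} t_0\otimes (t_1\cdot t_2\cdots t_n),$$ the sum over all ways to write $t$ as such a composition ($t_0$ with $n$ leaves, $t_i$ arbitrary reduced plane trees including $|$), and extended as an algebra morphism. $\mathcal H_{CK}$ is the commutative polynomial algebra over $\mathbb C$ on the set of (non-plane) rooted trees whose vertices are decorated by positive integers; its monomials are forests and its unit is the empty forest $\emptyset$. For $n\ge1$ and a forest $F$, $B_n^+(F)$ is the rooted tree with a new root decorated by $n$ joined to the roots of the trees of $F$ ($B_n^+(\emptyset)$ is a single vertex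 decorated $n$). The coproduct of $\mathcal H_{CK}$ is the algebra morphism defined by $\Delta(\emptyset)=\emptyset\otimes\emptyset$ and $\Delta(B_n^+(F))=\emptyset\otimes B_n^+(F)+(B_n^+\otimes\mathrm{Id})\circ\Delta(F)$. *)

From mathcomp Require Import all_boot.
Set Implicit Arguments. Unset Strict Implicit. Unset Printing Implicit Defensive.

Inductive ptree := PLeaf | PNode of seq ptree.

Definition is_leaf (t : ptree) : bool := if t is PLeaf then true else false.

Fixpoint reduced (t : ptree) : bool :=
  match t with
  | PLeaf => true
  | PNode ts => (1 < size ts) && all reduced ts
  end.

(* basis generators of H_PT: reduced plane trees with at least two leaves *)
Definition pt_gen (t : ptree) : bool := reduced t && ~~ is_leaf t.

(* A basis element of H_PT is a plane forest = word (seq) of generators;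
   the empty word is the unit. *)

Definition choices (A : Type) (ls : seq (seq A)) : seq (seq A) :=
  foldr (fun l acc => [seq x :: r | x <- l, r <- acc]) [:: [::]] ls.

(* all ways of writing t = t0 o (t1,...,tn): pairs (t0, [:: t1; ...; tn]) *)
Fixpoint decs (t : ptree) : seq (ptree * seq ptree) :=
  match t with
  | PLeaf => [:: (PLeaf, [:: PLeaf])]
  | PNode ts =>
      (PLeaf, [:: t]) ::
      [seq (PNode (map fst ch), flatten (map snd ch)) | ch <- choices (map decs ts)]
  end.

(* the tree t viewed as an element of the free algebra: | is the unit *)
Definition pt_word_of (t : ptree) : seq ptree := if is_leaf t then [::] else [:: t].

(* product of coproducts: expansion of a product of elements of H (x) H *)
Definition tens_prod (B : Type) (ls : seq (seq (seq B * seq B))) : seq (seq B * seq B) :=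
  foldr (fun l acc => [seq (a.1 ++ b.1, a.2 ++ b.2) | a <- l, b <- acc])
        [:: ([::], [::])] ls.

(* Delta(t) = sum t0 (x) t1 ... tn, as a list of basis tensors (coefficients 1) *)
Definition pt_cop_tree (t : ptree) : seq (seq ptree * seq ptree) :=
  [seq (pt_word_of d.1, flatten (map pt_word_of d.2)) | d <- decs t].

Definition pt_cop (w : seq ptree) : seq (seq ptree * seq ptree) :=
  tens_prod (map pt_cop_tree w).

Definition pt_counit (w : seq ptree) : nat := if nilp w then 1 else 0.

(* RNode n F = B_n^+(F).  Non-plane: trees/forests are compared up to
   isomorphism (permutation of children / of the trees of a forest). *)
Inductive rtree := RNode of nat & seq rtree.

Fixpoint tiso (s t : rtree) {struct s} : bool :=
  match s, t with
  | RNode a cs, RNode b ds =>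
      (a == b) &&
      (fix fiso (cs ds : seq rtree) {struct cs} : bool :=
         match cs with
         | [::] => nilp ds
         | c :: cs' =>
             (fix pick (pre ds : seq rtree) {struct ds} : bool :=
                match ds with
                | [::] => false
                | d :: ds' => (tiso c d && fiso cs' (pre ++ ds')) || pick (rcons pre d) ds'
                end) [::] ds
         end) cs ds
  end.

Definition forest_iso (F G : seq rtree) : bool := tiso (RNode 0 F) (RNode 0 G).

(* Delta(B_n^+(F)) = empty (x) B_n^+(F) + (B_n^+ (x) Id) Delta(F) *)
Fixpoint ck_cop_tree (t : rtree) : seq (seq rtree * seq rtree) :=
  match t with
  | RNode n F =>
      ([::], [:: t]) ::
      [seq ([:: RNode n p.1], p.2) | p <- tens_prod (map ck_cop_tree F)]
  end.

Definition ck_cop (F : seq rtree) : seq (seq rtree * seq rtree) :=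
  tens_prod (map ck_cop_tree F).

Definition ck_counit (F : seq rtree) : nat := if nilp F then 1 else 0.

(* coefficient of the basis tensor F (x) G (F, G forests up to isomorphism)
   in a sum of basis tensors *)
Definition coef (L : seq (seq rtree * seq rtree)) (F G : seq rtree) : nat :=
  count (fun p => forest_iso p.1 F && forest_iso p.2 G) L.

Fixpoint sk (t : ptree) : seq rtree :=
  match t with
  | PLeaf => [::]
  | PNode ts => [:: RNode (size ts).-1 (flatten (map sk ts))]
  end.

Definition skf (w : seq ptree) : seq rtree := flatten (map sk w).

Definition sk2 (L : seq (seq ptree * seq ptree)) : seq (seq rtree * seq rtree) :=
  [seq (skf p.1, skf p.2) | p <- L].

From mathcomp Require Import all_boot.

(* Both coproducts obey the same recursion on a root with children t_1..t_n:
   the trivial term | (x) t (resp. empty (x) B^+(F)), plus one term for each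
   choice of a term in the coproduct of every child.  Hence sk (x) sk maps the
   list of terms of Delta_PT(t) onto the list of terms of Delta_CK(sk t), term
   by term and in the same order, before any quotient by tree isomorphism is
   taken; multiplicativity of both coproducts extends this to forests. *)

Set Implicit Arguments.
Unset Strict Implicit.
Unset Printing Implicit Defensive.

Section TensorProduct.
Variable B : Type.
Implicit Types L M N : seq (seq B * seq B).

Definition tens_mul L M : seq (seq B * seq B) :=
  [seq (a.1 ++ b.1, a.2 ++ b.2) | a <- L, b <- M].

Definition tens1 : seq (seq B * seq B) := [:: ([::], [::])].

Lemma tens_prodE ls : tens_prod ls = foldr tens_mul tens1 ls.
Proof. by []. Qed.

Lemma tens_mul_cons x L M :
  tens_mul (x :: L) M = [seq (x.1 ++ b.1, x.2 ++ b.2) | b <- M] ++ tens_mul L M.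
Proof. by []. Qed.

Lemma tens_mul_catl L1 L2 M : tens_mul (L1 ++ L2) M = tens_mul L1 M ++ tens_mul L2 M.
Proof. by elim: L1 => //= x L1 IH; rewrite !tens_mul_cons IH catA. Qed.

Lemma tens_mul_prefix x M N :
  tens_mul [seq (x.1 ++ b.1, x.2 ++ b.2) | b <- M] N
  = [seq (x.1 ++ b.1, x.2 ++ b.2) | b <- tens_mul M N].
Proof.
elim: M => //= y M IH; rewrite !tens_mul_cons IH map_cat -map_comp.
by congr (_ ++ _); apply: eq_map => b /=; rewrite !catA.
Qed.

Lemma tens_mulA L M N : tens_mul (tens_mul L M) N = tens_mul L (tens_mul M N).
Proof.
by elim: L => //= x L IH; rewrite !tens_mul_cons tens_mul_catl IH tens_mul_prefix.
Qed.

Lemma tens_mul1l M : tens_mul tens1 M = M.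
Proof. by rewrite /tens_mul /= cats0; elim: M => //= -[a b] M ->. Qed.

Lemma tens_mul1r L : tens_mul L tens1 = L.
Proof. by elim: L => //= -[a b] L IH; rewrite tens_mul_cons IH /= !cats0. Qed.

Lemma tens_prod_cat ls1 ls2 :
  tens_prod (ls1 ++ ls2) = tens_mul (tens_prod ls1) (tens_prod ls2).
Proof.
elim: ls1 => [|l ls1 IH]; first by rewrite tens_mul1l.
by rewrite cat_cons !tens_prodE /= -!tens_prodE IH tens_mulA.
Qed.

Lemma choices_tens_prod A (f : A -> seq B * seq B) (ls : seq (seq A)) :
  [seq (size ch, (flatten [seq (f x).1 | x <- ch], flatten [seq (f x).2 | x <- ch]))
  | ch <- choices ls]
  = [seq (size ls, p) | p <- tens_prod (map (map f) ls)].
Proof.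
elim: ls => [|l ls IH] //=; elim: l => [|x l IHl] //=.
rewrite !map_cat IHl; congr (_ ++ _).
have -> : [seq ((size ls).+1, p) | p <- [seq ((f x).1 ++ b.1, (f x).2 ++ b.2)
                                       | b <- tens_prod (map (map f) ls)]]
        = [seq (q.1.+1, ((f x).1 ++ q.2.1, (f x).2 ++ q.2.2))
          | q <- [seq (size ls, p) | p <- tens_prod (map (map f) ls)]].
  by rewrite -!map_comp.
by rewrite -IH -!map_comp.
Qed.

End TensorProduct.

Section MultiplicativeMap.
Variables (B C : Type) (h : seq B -> seq C).
Hypothesis h_nil : h [::] = [::].
Hypothesis h_cat : forall a b, h (a ++ b) = h a ++ h b.

Definition tens_map (p : seq B * seq B) : seq C * seq C := (h p.1, h p.2).

Lemma map_tens_mul L M :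
  map tens_map (tens_mul L M) = tens_mul (map tens_map L) (map tens_map M).
Proof.
elim: L => //= x L IH; rewrite !tens_mul_cons map_cat IH -!map_comp.
by congr (_ ++ _); apply: eq_map => b; rewrite /tens_map /= !h_cat.
Qed.

Lemma map_tens_prod ls : map tens_map (tens_prod ls) = tens_prod (map (map tens_map) ls).
Proof.
elim: ls => [|l ls IH]; first by rewrite /= /tens_map h_nil.
by rewrite !tens_prodE /= -!tens_prodE map_tens_mul IH.
Qed.

End MultiplicativeMap.

Definition ptree_ind_all (P : ptree -> Prop) (P_leaf : P PLeaf)
    (P_node : forall ts, foldr (fun t Q => P t /\ Q) True ts -> P (PNode ts)) :
    forall t, P t :=
  fix ind t := match t with
  | PLeaf => P_leaf
  | PNode ts =>
      P_node ts ((fix ind_all ts := match ts return foldr (fun t Q => P t /\ Q) True ts with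
                  | [::] => I
                  | t :: ts' => conj (ind t) (ind_all ts')
                  end) ts)
  end.

Lemma skf_cat a b : skf (a ++ b) = skf a ++ skf b.
Proof. by rewrite /skf map_cat flatten_cat. Qed.

Lemma skf_flatten ws : skf (flatten ws) = flatten (map skf ws).
Proof. by elim: ws => //= w ws IH; rewrite skf_cat IH. Qed.

Lemma skf_pt_words ts : skf (flatten (map pt_word_of ts)) = skf ts.
Proof. by elim: ts => //= t ts IH; rewrite skf_cat IH; case: t. Qed.

Lemma ck_cop_cat F G : ck_cop (F ++ G) = tens_mul (ck_cop F) (ck_cop G).
Proof. by rewrite /ck_cop map_cat tens_prod_cat. Qed.

Lemma ck_cop1 t : ck_cop [:: t] = ck_cop_tree t.
Proof. exact: tens_mul1r. Qed.

Lemma ck_cop_skf w : ck_cop (skf w) = foldr (@tens_mul _) (@tens1 _) [seq ck_cop (sk t) | t <- w].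
Proof. by elim: w => //= t w <-; rewrite -ck_cop_cat. Qed.

Definition sk_dec (d : ptree * seq ptree) : seq rtree * seq rtree := (sk d.1, skf d.2).

Lemma sk_decs t : map sk_dec (decs t) = ck_cop (sk t).
Proof.
elim/ptree_ind_all: t => [|ts IH] //=.
rewrite ck_cop1 /=; congr (_ :: _); rewrite -map_comp.
have children : tens_prod (map (map sk_dec) (map decs ts)) = ck_cop (skf ts).
  rewrite ck_cop_skf; elim: ts IH => //= t ts IHts [Ht /IHts].
  by move=> ->; rewrite -Ht.
rewrite -[tens_prod _]/(ck_cop (skf ts)) -children.
have := congr1 (map (fun q : nat * (seq rtree * seq rtree) => ([:: RNode q.1.-1 q.2.1], q.2.2)))
               (choices_tens_prod sk_dec (map decs ts)).
rewrite -!map_comp size_map => <-.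
by apply: eq_map => ch; rewrite /sk_dec /= size_map skf_flatten -!map_comp.
Qed.

Lemma sk2_pt_cop_tree t : sk2 (pt_cop_tree t) = ck_cop (sk t).
Proof.
rewrite -sk_decs /sk2 /pt_cop_tree -map_comp; apply: eq_map => -[t0 ts] /=.
by rewrite skf_pt_words /sk_dec; case: t0.
Qed.

Lemma sk2_pt_cop w : sk2 (pt_cop w) = ck_cop (skf w).
Proof.
rewrite /sk2 /pt_cop (map_tens_prod (h := skf)) //; last exact: skf_cat.
rewrite ck_cop_skf; elim: w => //= t w IH.
by rewrite tens_prodE /= -tens_prodE IH -sk2_pt_cop_tree.
Qed.

Theorem mainTheorem8 (w : seq ptree) :
  all pt_gen w ->
  (forall F G : seq rtree, coef (sk2 (pt_cop w)) F G = coef (ck_cop (skf w)) F G)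
  /\ ck_counit (skf w) = pt_counit w.
Proof.
move=> w_gen; split; first by move=> F G; rewrite sk2_pt_cop.
by case: w w_gen => [|[|ts] w].
Qed.
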